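(* Let $m\in\mathbb{Z}^+$, let $\lambda_0,\dots,\lambda_{m-1},c_0,\dots,c_{m-1}\in\mathbb{R}$, let $X=\{0,1\}^{\mathbb{Z}}$ and $\Omega=\mathbb{Z}_m\times X$, and let $T:\Omega\to\Omega$, $T(k,x)=(k+1 \bmod m,\,T_1x)$, where $(T_1x)_n=x_{n+1}$ is the left shift. For $E\in\mathbb{R}$ define $A_E:\Omega\to SL(2,\mathbb{R})$ by $$A_E(k,x)=\begin{bmatrix}E-\lambda_kx_0-c_k & -1\\ 1 & 0\end{bmatrix},$$ and for $n\in\mathbb{Z}^+$ and $\omega\in\Omega$ put $A^n_{E,\omega}=A_E(T^{n-1}\omega)\cdots A_E(T\omega)A_E(\omega)$ (so that $A^n_{E,(0,x)}=A(n-1)\cdots A(0)$ with $A(j)=\begin{bmatrix}E-V_x(j)&-1\\1&0\end{bmatrix}$, $V_x(j)=\lambda_{j\bmod m}x_j+c_{j\bmod m}$). Then for every $E\in\mathbb{R}$, the cocycle $(T,A_E)$ is uniformly hyperbolic if and only if the finite set of matrices $\{M: M=A^m_{E,(0,x)}\text{ for some }x\in X\}$ is uniformly hyperbolic.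
   Context: The cocycle $(T,A_E)$ is the map $\Omega\times\mathbb{R}^2\to\Omega\times\mathbb{R}^2$, $(\omega,v)\mapsto(T\omega,A_E(\omega)v)$. The cocycle is uniformly hyperbolic if there exist $\lambda>1$ and $C>0$ such that $\|A^n_{E,\omega}\|>C\lambda^n$ for all $n\in\mathbb{Z}^+$ and all $\omega\in\Omega$. A set of matrices $\mathcal{S}\subset SL(2,\mathbb{R})$ is uniformly hyperbolic if there exists $\lambda>1$ such that for every $n\ge1$ and every product $M_{1}M_{2}\cdots M_{n}$ of $n$ matrices from $\mathcal{S}$ (repetitions allowed), $\|M_1\cdots M_n\|>\lambda^n$. *)

From HB Require Import structures.
From mathcomp Require Import all_boot all_order all_algebra.
From mathcomp Require Import classical_sets reals.
Set Implicit Arguments. Unset Strict Implicit. Unset Printing Implicit Defensive.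
Import Order.TTheory GRing.Theory Num.Theory.
Local Open Scope classical_set_scope.
Local Open Scope ring_scope.

Section Defs.
Variable R : realType.

Definition vnorm2 (v : 'cV[R]_2) : R := Num.sqrt (\sum_(i < 2) v i 0 ^+ 2).

Definition opnorm2 (A : 'M[R]_2) : R :=
  sup [set vnorm2 (A *m v) | v in [set v : 'cV[R]_2 | vnorm2 v = 1]].

Definition seqX := int -> bool.
Definition shift (x : seqX) : seqX := fun n => x (n + 1)%R.

Variable m : nat.
Definition Omega := ('I_m * seqX)%type.

Definition Tmap (w : Omega) : Omega := (ordS w.1, shift w.2).

Definition AE (lam c : 'I_m -> R) (E : R) (w : Omega) : 'M[R]_2 :=
  \matrix_(i < 2, j < 2)
    if i == 0 :> nat then
      (if j == 0 :> nat then E - lam w.1 * (w.2 0%R : nat)%:R - c w.1 else -1)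
    else (if j == 0 :> nat then 1 else 0).

Fixpoint cocycle_pow (lam c : 'I_m -> R) (E : R) (n : nat) (w : Omega)
  : 'M[R]_2 :=
  match n with
  | 0 => 1%:M
  | n'.+1 => AE lam c E (iter n' Tmap w) *m cocycle_pow lam c E n' w
  end.

Definition cocycle_UH (lam c : 'I_m -> R) (E : R) : Prop :=
  exists (l C : R), 1 < l /\ 0 < C /\
    forall (n : nat) (w : Omega), (0 < n)%N ->
      C * l ^+ n < opnorm2 (cocycle_pow lam c E n w).
End Defs.

Definition matset_UH (R : realType) (S : set 'M[R]_2) : Prop :=
  exists l : R, 1 < l /\
    forall (n : nat) (M : 'I_n -> 'M[R]_2), (0 < n)%N ->
      (forall i, S (M i)) ->
      l ^+ n < opnorm2 (\big[mulmx/1%:M]_(i < n) M i).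

From HB Require Import structures.
From mathcomp Require Import all_boot all_order all_algebra.
From mathcomp Require Import classical_sets reals.
From mathcomp Require Import lra zify.
Import Order.TTheory GRing.Theory Num.Theory.
Local Open Scope classical_set_scope.
Local Open Scope ring_scope.

(* A product of n blocks A^m_(0,x) is itself a cocycle product A^(nm)_(0,x')
   for the concatenated sequence x', and so is each of its powers; hence
   C l^(knm) < |P^k| <= |P|^k for all k, which forces |P| >= l^(nm).
   Conversely, any A^n_w becomes a product of whole blocks after multiplying
   it on both sides by at most 2m one-step matrices, each of norm at most K,
   so the growth of block products passes to the cocycle at the cost of the
   constant K^(2m) and with rate an "m-th root" of the block rate. *)

Lemma bernoulli_ineq {R : realDomainType} (x : R) (n : nat) :
  -1 <= x -> 1 + n%:R * x <= (1 + x) ^+ n.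
Proof.
move=> hx; elim: n => [|n IH]; first by rewrite mul0r addr0 expr0.
have hx1 : 0 <= 1 + x by lra.
have : (1 + x) * (1 + n%:R * x) <= (1 + x) * (1 + x) ^+ n by rewrite ler_wpM2l.
have : 0 <= n%:R * (x * x) :> R by rewrite mulr_ge0 ?ler0n // -expr2 sqr_ge0.
rewrite exprS -natr1; nra.
Qed.

(* Real fields have no m-th roots; Bernoulli's inequality shows that
   l' = (1 - e)^-1 with e = (1 - l^-1) / m will do. *)
Lemma exists_gt1_expr_le {R : realFieldType} (l : R) (m : nat) :
  1 < l -> (0 < m)%N -> exists2 l', 1 < l' & l' ^+ m <= l.
Proof.
move=> hl hm.
have hm1 : 1 <= m%:R :> R by rewrite ler1n.
have hl0 : 0 < l by lra.
have hli : 0 < l^-1 < 1 by rewrite invr_gt0 hl0 invf_lt1.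
pose e := (1 - l^-1) / m%:R.
have hme : m%:R * e = 1 - l^-1 by rewrite mulrC divfK // gt_eqF // (lt_le_trans ltr01).
have he : 0 < e < 1.
  have : 0 < e by rewrite divr_gt0 ?(lt_le_trans ltr01 hm1) // subr_gt0; case/andP: hli.
  nra.
have he1 : 0 < 1 - e by lra.
exists (1 - e)^-1; first by rewrite invf_gt1 //; lra.
rewrite exprVn -[l]invrK lef_pV2 ?posrE ?exprn_gt0 ?invr_gt0 //.
have := bernoulli_ineq (- e) m; rewrite mulrN hme opprB addrC subrK; apply; lra.
Qed.

Lemma le_of_geometric_lt {R : archiRealFieldType} (a b c : R) :
  0 < c -> 0 <= b -> (forall k, (0 < k)%N -> c * b ^+ k < a ^+ k) -> b <= a.
Proof.
move=> hc hb hk; rewrite leNgt; apply/negP => hab.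
have ha : 0 < a by have := hk 1%N isT; rewrite !expr1; have := mulr_ge0 (ltW hc) hb; lra.
pose q := b / a.
have hq : 0 < q - 1 by rewrite subr_gt0 ltr_pdivlMr // mul1r.
pose k := (Num.Def.archi_bound ((c * (q - 1))^-1)).+1.
have hcq : 0 < c * (q - 1) by rewrite mulr_gt0.
have hk1 : 1 < c * (k%:R * (q - 1)).
  rewrite mulrCA -(ltr_pdivrMr _ _ hcq) mul1r /k -natr1.
  have := @archi_boundP R (c * (q - 1))^-1; rewrite invr_ge0 ltW //; lra.
have hqk : 1 < c * q ^+ k.
  have := bernoulli_ineq (q - 1) k; rewrite addrCA subrr addr0 => hB.
  have : c * (1 + k%:R * (q - 1)) <= c * q ^+ k.
    by rewrite ler_wpM2l ?(ltW hc) //; apply: hB; lra.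
  rewrite mulrDr mulr1; lra.
have := hk k isT.
rewrite -[b](divfK (lt0r_neq0 ha)) -/q exprMn mulrA.
have hak : 0 < a ^+ k by rewrite exprn_gt0.
rewrite -[X in _ < X]mul1r ltr_pM2r //; lra.
Qed.

Lemma lift_ord0_ord0 : lift ord0 (ord0 : 'I_1) = 1 :> 'I_2.
Proof. exact: val_inj. Qed.

Section OperatorNorm.
Context {R : realType}.
Implicit Types (A B : 'M[R]_2) (v : 'cV[R]_2).

Lemma vnorm2E v : vnorm2 v = Num.sqrt (v 0 0 ^+ 2 + v 1 0 ^+ 2).
Proof. by rewrite /vnorm2 !big_ord_recl big_ord0 addr0 lift_ord0_ord0. Qed.

Lemma vnorm2_ge0 v : 0 <= vnorm2 v.
Proof. exact: sqrtr_ge0. Qed.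

Lemma vnorm2Z (a : R) v : vnorm2 (a *: v) = `|a| * vnorm2 v.
Proof. by rewrite !vnorm2E !mxE !exprMn -mulrDr sqrtrM ?sqr_ge0 // sqrtr_sqr. Qed.

Lemma normr_le_vnorm2 v i : `|v i 0| <= vnorm2 v.
Proof.
rewrite vnorm2E -sqrtr_sqr ler_sqrt ?addr_ge0 ?sqr_ge0 //.
have := sqr_ge0 (v 0 0); have := sqr_ge0 (v 1 0).
case: i => -[|[|//]] hi.
- have -> : Ordinal hi = 0 by exact: val_inj.
  lra.
- have -> : Ordinal hi = 1 by exact: val_inj.
  lra.
Qed.

Lemma vnorm2_le_sum v : vnorm2 v <= `|v 0 0| + `|v 1 0|.
Proof.
rewrite vnorm2E -(ger0_norm (addr_ge0 (normr_ge0 (v 0 0)) (normr_ge0 (v 1 0)))).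
rewrite -sqrtr_sqr ler_sqrt ?sqr_ge0 // sqrrD -[v 0 0 ^+ 2]real_normK ?num_real //.
by rewrite -[v 1 0 ^+ 2]real_normK ?num_real // -addrA lerD2l lerDr mulrn_wge0 ?mulr_ge0.
Qed.

Lemma vnorm2_eq0 v : vnorm2 v = 0 -> v = 0.
Proof.
move=> v0; apply/matrixP => i j; rewrite ord1 mxE; apply/eqP.
by rewrite -normr_le0 -v0 normr_le_vnorm2.
Qed.

Lemma mulmx2E A v i : (A *m v) i 0 = A i 0 * v 0 0 + A i 1 * v 1 0.
Proof. by rewrite mxE !big_ord_recl big_ord0 addr0 lift_ord0_ord0. Qed.

Let unit_image A := [set vnorm2 (A *m v) | v in [set v | vnorm2 v = 1]].

Let e0 : 'cV[R]_2 := \col_i (i == 0)%:R.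

Let vnorm2_e0 : vnorm2 e0 = 1.
Proof. by rewrite vnorm2E !mxE /= expr1n expr0n addr0 sqrtr1. Qed.

Let unit_image_neq0 A : unit_image A !=set0.
Proof. by exists (vnorm2 (A *m e0)), e0. Qed.

Let unit_image_ub A :
  ubound (unit_image A) (`|A 0 0| + `|A 0 1| + `|A 1 0| + `|A 1 1|).
Proof.
move=> _ [v /= v1 <-]; apply: le_trans (vnorm2_le_sum _) _; rewrite !mulmx2E.
have vi_le1 i : `|v i 0| <= 1 by rewrite -v1 normr_le_vnorm2.
have entry_le a i : `|a * v i 0| <= `|a| by rewrite normrM ler_piMr.
have := ler_normD (A 0 0 * v 0 0) (A 0 1 * v 1 0).
have := ler_normD (A 1 0 * v 0 0) (A 1 1 * v 1 0).
have := entry_le (A 0 0) 0; have := entry_le (A 0 1) 1.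
have := entry_le (A 1 0) 0; have := entry_le (A 1 1) 1.
lra.
Qed.

Lemma opnorm2_le_sum A :
  opnorm2 A <= `|A 0 0| + `|A 0 1| + `|A 1 0| + `|A 1 1|.
Proof. exact: ge_sup (unit_image_neq0 A) (unit_image_ub A). Qed.

Lemma vnorm2_mulmx_unit_le A v : vnorm2 v = 1 -> vnorm2 (A *m v) <= opnorm2 A.
Proof.
by move=> v1; apply: ub_le_sup; [exact: ex_intro (unit_image_ub A) | exists v].
Qed.

Lemma opnorm2_ge0 A : 0 <= opnorm2 A.
Proof. exact: le_trans (vnorm2_ge0 _) (vnorm2_mulmx_unit_le A _ vnorm2_e0). Qed.

Lemma vnorm2_mulmx_le A v : vnorm2 (A *m v) <= opnorm2 A * vnorm2 v.
Proof.
have [/vnorm2_eq0 ->|vn0] := eqVneq (vnorm2 v) 0.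
  by rewrite mulmx0 -(scale0r 0) vnorm2Z normr0 !mul0r mulr0.
have vpos : 0 < vnorm2 v by rewrite lt_neqAle eq_sym vn0 vnorm2_ge0.
rewrite -[v in A *m v](scalerKV vn0) -scalemxAr vnorm2Z ger0_norm ?vnorm2_ge0 //.
rewrite mulrC ler_pM2r // vnorm2_mulmx_unit_le // vnorm2Z.
by rewrite ger0_norm ?invr_ge0 ?vnorm2_ge0 // mulVf.
Qed.

Lemma opnorm2M_le A B : opnorm2 (A *m B) <= opnorm2 A * opnorm2 B.
Proof.
apply: ge_sup (unit_image_neq0 _) _ => _ [v /= v1 <-]; rewrite -mulmxA.
apply: le_trans (vnorm2_mulmx_le _ _) _.
by rewrite ler_wpM2l ?opnorm2_ge0 // -[X in _ <= X]mulr1 -v1 vnorm2_mulmx_le.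
Qed.

Lemma opnorm2_1_le : opnorm2 (1%:M : 'M[R]_2) <= 1.
Proof. by apply: ge_sup (unit_image_neq0 _) _ => _ [v /= v1 <-]; rewrite mul1mx v1. Qed.

Lemma opnorm2X_le A k : opnorm2 (A ^+ k) <= opnorm2 A ^+ k.
Proof.
elim: k => [|k IH]; first exact: opnorm2_1_le.
rewrite !exprS; apply: le_trans (opnorm2M_le A (A ^+ k)) _.
by rewrite ler_wpM2l ?opnorm2_ge0.
Qed.

End OperatorNorm.

Section Products.
Context {R : ringType} {d : nat} (S : set 'M[R]_d.+1).

Inductive prodn : nat -> 'M[R]_d.+1 -> Prop :=
| prodn0 : prodn 0 1
| prodnS n B P : S B -> prodn n P -> prodn n.+1 (B * P).

Lemma prodnP n P :
  prodn n P <->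
  exists2 M : 'I_n -> 'M[R]_d.+1,
    (forall i, S (M i)) & P = \big[mulmx/1%:M]_(i < n) M i.
Proof.
split.
- elim=> [|{}n B {}P SB _ [M SM ->]]; first by exists (fun _ => 1) => [[]|]; rewrite ?big_ord0.
  exists (fun i => if unlift ord0 i is Some j then M j else B).
    by move=> i; case: (unlift ord0 i).
  rewrite big_ord_recl unlift_none mulmxE; congr (_ * _).
  by apply: eq_bigr => i _; rewrite liftK.
- elim: n P => [|n IH] _ [M SM ->]; first by rewrite big_ord0; exact: prodn0.
  rewrite big_ord_recl mulmxE; apply: prodnS => //.
  by apply: IH; exists (fun i => M (lift ord0 i)).
Qed.

Lemma prodn_mul a b P Q : prodn a P -> prodn b Q -> prodn (a + b) (P * Q).
Proof.
elim=> [|{}a B {}P SB _ IH] hQ; first by rewrite mul1r.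
by rewrite -mulrA; apply: prodnS => //; exact: IH.
Qed.

Lemma prodnX n P k : prodn n P -> prodn (k * n) (P ^+ k).
Proof.
move=> hP; elim: k => [|k IH]; first exact: prodn0.
by rewrite exprS mulSn; apply: prodn_mul.
Qed.

End Products.

Lemma iter_shift k (x : seqX) z : iter k shift x z = x (z + k%:Z).
Proof.
elim: k z => [|k IH] z /=; first by rewrite addr0.
by rewrite /shift IH -addrA [1 + _]addrC -PoszD addn1.
Qed.

Lemma val_iter_ordS m k (i : 'I_m) : val (iter k (@ordS m) i) = ((i + k) %% m)%N.
Proof.
elim: k => [|k IH] /=; first by rewrite addn0 modn_small.
by rewrite IH -addn1 modnDml addn1 addnS.
Qed.

Lemma iter_Tmap m k (w : Omega m) :
  iter k (@Tmap m) w = (iter k (@ordS m) w.1, iter k shift w.2).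
Proof. by elim: k => [|k IH] /=; [case: w | rewrite IH]. Qed.

Section Cocycle.
Context {R : realType} {m : nat} (lam c : 'I_m -> R) (E : R).
Local Notation A := (cocycle_pow lam c E).

Lemma cocycle_powD a b w : A (a + b) w = A a (iter b (@Tmap m) w) *m A b w.
Proof.
elim: a => [|a IH]; first by rewrite mul1mx.
by rewrite addSn /= IH mulmxA iterD.
Qed.

Lemma cocycle_pow_eq n (k : 'I_m) (x y : seqX) :
  (forall j, (j < n)%N -> x j%:Z = y j%:Z) -> A n (k, x) = A n (k, y).
Proof.
elim: n => [//|n IH] xy /=.
rewrite IH => [|j jn]; last by rewrite xy // ltnW.
by congr (_ *m _); apply/matrixP => i j; rewrite !mxE !iter_Tmap /= !iter_shift add0r xy.
Qed.

(* The 2 accounts for the constant entries -1 and 1 of A_E. *)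
Definition cocycle_bound : R := `|E| + \sum_i `|lam i| + \sum_i `|c i| + 2.

Lemma cocycle_bound_ge1 : 1 <= cocycle_bound.
Proof.
have : 0 <= \sum_i `|lam i| by rewrite sumr_ge0.
have : 0 <= \sum_i `|c i| by rewrite sumr_ge0.
have := normr_ge0 E; rewrite /cocycle_bound; lra.
Qed.

Lemma opnorm2_AE_le w : opnorm2 (AE lam c E w) <= cocycle_bound.
Proof.
apply: le_trans (opnorm2_le_sum _) _; rewrite !mxE /= normrN normr1 normr0 addr0.
have le_sum (f : 'I_m -> R) k : `|f k| <= \sum_i `|f i|.
  by rewrite (bigD1 k) //= lerDl sumr_ge0.
have x0_le1 : `|(w.2 0 : nat)%:R : R| <= 1 by case: (w.2 0); rewrite ?normr1 ?normr0.
have := le_sum lam w.1; have := le_sum c w.1.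
have : `|lam w.1 * (w.2 0 : nat)%:R| <= `|lam w.1| by rewrite normrM ler_piMr.
have := ler_normB (E - lam w.1 * (w.2 0 : nat)%:R) (c w.1).
have := ler_normB E (lam w.1 * (w.2 0 : nat)%:R).
rewrite /cocycle_bound; lra.
Qed.

Lemma opnorm2_cocycle_pow_le n w : opnorm2 (A n w) <= cocycle_bound ^+ n.
Proof.
elim: n => [|n IH] /=; first exact: opnorm2_1_le.
apply: le_trans (opnorm2M_le _ _) _.
by rewrite exprS ler_pM ?opnorm2_ge0 ?opnorm2_AE_le.
Qed.

End Cocycle.

Section Blocks.
Variables (R : realType) (m : nat) (hm : (0 < m)%N) (lam c : 'I_m -> R) (E : R).
Local Notation A := (cocycle_pow lam c E).
Local Notation K := (cocycle_bound lam c E).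
Local Notation o := (Ordinal hm).

Definition block_set := [set M : 'M[R]_2 | exists x : seqX, M = A m (o, x)].

Lemma iter_Tmap_block j x : iter (j * m) (@Tmap m) (o, x) = (o, iter (j * m) shift x).
Proof. by rewrite iter_Tmap; congr (_, _); apply: val_inj; rewrite val_iter_ordS modnMl. Qed.

Lemma prodn_block_set j P : prodn block_set j P -> exists x, P = A (j * m) (o, x).
Proof.
elim=> [|n _ _ [x0 ->] _ [x1 ->]]; first by exists (fun=> false); rewrite mul0n.
exists (fun z => if z < (n * m)%N%:Z then x1 z else x0 (z - (n * m)%N%:Z)).
rewrite mulSn cocycle_powD iter_Tmap_block; congr (_ *m _).
- apply: cocycle_pow_eq => i im.
  by rewrite iter_shift -PoszD ltz_nat ltnNge leq_addl /= PoszD addrK.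
- by apply: cocycle_pow_eq => i im; rewrite ltz_nat im.
Qed.

Lemma cocycle_pow_prodn_block_set j x : prodn block_set j (A (j * m) (o, x)).
Proof.
elim: j => [|j IH]; first exact: prodn0.
rewrite mulSn cocycle_powD iter_Tmap_block; apply: prodnS => //.
by exists (iter (j * m) shift x).
Qed.

(* For w = (k, x), start k steps earlier at phase 0 from the sequence y with
   T^k (0, y) = w, and stop at the next multiple of m. *)
Lemma cocycle_pow_extend_blocks n (w : Omega m) : exists j x, (n <= j * m)%N /\
  opnorm2 (A (j * m) (o, x)) <= K ^+ (2 * m) * opnorm2 (A n w).
Proof.
case: w => k x; set j := ((k + n) %/ m).+1; set r := (j * m - (k + n))%N.
have jm : (j * m = r + n + k)%N by have := ltn_ceil (k + n) hm; rewrite /r; lia.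
have rk : (r + k <= 2 * m)%N by have := leq_divM (k + n) m; have := ltn_ord k; rewrite /r; lia.
pose y : seqX := fun z => x (z - k%:Z).
exists j, y; split; first lia.
have start : iter k (@Tmap m) (o, y) = (k, iter k shift y).
  by rewrite iter_Tmap; congr (_, _); apply: val_inj; rewrite val_iter_ordS add0n modn_small.
have shifted : A n (k, iter k shift y) = A n (k, x).
  by apply: cocycle_pow_eq => i _; rewrite iter_shift /y addrK.
rewrite jm !cocycle_powD start shifted.
have K1 := cocycle_bound_ge1 lam c E.
have K0 : 0 <= K by apply: le_trans K1.
apply: le_trans (opnorm2M_le _ _) _.
apply: le_trans (ler_wpM2r (opnorm2_ge0 _) (opnorm2M_le _ _)) _.
apply: (@le_trans _ _ (K ^+ r * opnorm2 (A n (k, x)) * K ^+ k)).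
  rewrite ler_pM ?mulr_ge0 ?opnorm2_ge0 ?opnorm2_cocycle_pow_le //.
  by rewrite ler_wpM2r ?opnorm2_ge0 ?opnorm2_cocycle_pow_le.
by rewrite mulrAC -exprD ler_wpM2r ?opnorm2_ge0 ?ler_weXn2l.
Qed.

Lemma cocycle_UH_block_set_UH : cocycle_UH lam c E -> matset_UH block_set.
Proof.
move=> [l [C [l1 [C0 UH]]]]; pose L := l ^+ m.
have L1 : 1 < L by rewrite exprn_egt1 // -lt0n.
exists ((1 + L) / 2); split=> [|n M n0 SM]; first lra.
set P := \big[mulmx/1%:M]_(i < n) M i.
have prodP : prodn block_set n P by apply/prodnP; exists M.
have growth k : (0 < k)%N -> C * (L ^+ n) ^+ k < opnorm2 P ^+ k.
  move=> k0; have [x Pk] := prodn_block_set _ _ (prodnX _ _ _ k prodP).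
  apply: lt_le_trans (opnorm2X_le P k); rewrite Pk -!exprM.
  by rewrite (_ : (m * (n * k) = k * n * m)%N) ?UH ?muln_gt0 ?k0 ?n0 //; lia.
have Ln0 : 0 <= L ^+ n by rewrite exprn_ge0 // ltW // (lt_trans ltr01).
apply: lt_le_trans (le_of_geometric_lt _ _ _ C0 Ln0 growth).
by rewrite ltrXn2r -?lt0n //; lra.
Qed.

Lemma block_set_UH_cocycle_UH : matset_UH block_set -> cocycle_UH lam c E.
Proof.
move=> [l [l1 UH]]; have [l' l'1 l'm] := exists_gt1_expr_le l m l1 hm.
have K0 : 0 < K ^+ (2 * m).
  by rewrite exprn_gt0 // (lt_le_trans ltr01) ?cocycle_bound_ge1.
exists l', (K ^+ (2 * m))^-1; split=> //; split=> [|n w n0]; first by rewrite invr_gt0.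
have [j [x [njm extend]]] := cocycle_pow_extend_blocks n w.
have [M SM QM] := (prodnP _ _ _).1 (cocycle_pow_prodn_block_set j x).
rewrite QM in extend.
have /UH /(_ SM) lj : (0 < j)%N by rewrite lt0n; apply: contraTneq njm => ->; lia.
rewrite ltr_pdivrMl // (le_lt_trans _ (lt_le_trans lj extend)) //.
apply: (@le_trans _ _ (l' ^+ (j * m))); first by rewrite ler_weXn2l // ltW.
by rewrite mulnC exprM lerXn2r ?nnegrE ?exprn_ge0 //; lra.
Qed.

End Blocks.

Theorem lemma1 (R : realType) (m : nat) (hm : (0 < m)%N)
  (lam c : 'I_m -> R) (E : R) :
  cocycle_UH lam c E <->
  matset_UH [set M : 'M[R]_2 |
     exists x : seqX, M = cocycle_pow lam c E m (Ordinal hm, x)].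
Proof.
split; [exact: cocycle_UH_block_set_UH | exact: block_set_UH_cocycle_UH].
Qed.
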